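(* Let $q$ be a prime power. The number of triples $(\lambda_0,\lambda_1,\lambda_2)\in\mathbb{F}_q^3$ for which the polynomial $p(x)=x^3-\lambda_2x^2-\lambda_1x-\lambda_0$ is irreducible over $\mathbb{F}_q$ and the polynomial $r(x)=x^3+\lambda_2x^2-(\lambda_1-1)x+\lambda_0$ is reducible over $\mathbb{F}_q$ is at least $\frac{q(q-1)^2}{9}-\frac{2(q-1)}{3}$. *)

From mathcomp Require Import all_boot all_order all_algebra all_field.
Set Implicit Arguments. Unset Strict Implicit. Unset Printing Implicit Defensive.
Import GRing.Theory.
Local Open Scope ring_scope.

Definition pL (F : finFieldType) (l0 l1 l2 : F) : {poly F} :=
  'X^3 - l2%:P * 'X^2 - l1%:P * 'X - l0%:P.

Definition rL (F : finFieldType) (l0 l1 l2 : F) : {poly F} :=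
  'X^3 + l2%:P * 'X^2 - (l1 - 1)%:P * 'X + l0%:P.

From mathcomp Require Import all_boot all_order all_algebra all_field.
From mathcomp Require Import ring lra zify.
Set Implicit Arguments. Unset Strict Implicit. Unset Printing Implicit Defensive.
Import GRing.Theory Num.Theory.

(* Since r(-t) = -(p(t) + t), the polynomial r is reducible as soon as
   p(t) = -t for some t, and the cubic p is irreducible as soon as it has no
   root.  For fixed t <> 0, the triples with p(t) = -t are parametrized by
   (l1, l2) in F_q^2, t is never a root of them, and for s <> t those with
   p(s) = 0 form an affine line of slope -(s + t).  These q - 1 lines meet
   pairwise and each point lies on at most three of them, so a second-moment
   count leaves at least (q^2 + 2)/3 points on no line, i.e. with p rootless.
   As p + X has at most three roots, a triple arises from at most three
   values of t, so the number N of triples found satisfies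
   9 N >= (q - 1)(q^2 + 2) >= q (q - 1)^2. *)

Section Incidence.

Variables (X I : finType) (A : {set I}) (L : I -> {set X}).

Definition incidence_deg (x : X) : nat := #|[set i in A | x \in L i]|.

Lemma incidence_degE x : incidence_deg x = \sum_(i in A) (x \in L i).
Proof.
rewrite /incidence_deg -sum1_card [RHS]big_mkcond [LHS]big_mkcond /=.
by apply: eq_bigr => i _; rewrite inE; case: (i \in A) => //=; case: (x \in L i).
Qed.

Lemma sum_incidence_deg : \sum_x incidence_deg x = \sum_(i in A) #|L i|.
Proof.
under eq_bigr => x _ do rewrite incidence_degE.
rewrite exchange_big; apply: eq_bigr => i _.
by rewrite -sum1_card [RHS]big_mkcond; apply: eq_bigr => x _; case: (x \in L i).
Qed.

Lemma sum_incidence_deg_sqr :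
  \sum_x incidence_deg x ^ 2 = \sum_(i in A) \sum_(j in A) #|L i :&: L j|.
Proof.
under eq_bigr => x _ do rewrite incidence_degE expnS expn1 big_distrl /=.
rewrite exchange_big; apply: eq_bigr => i _.
under eq_bigr => x _ do rewrite big_distrr /=.
rewrite exchange_big; apply: eq_bigr => j _.
rewrite -sum1_card [RHS]big_mkcond; apply: eq_bigr => x _.
by rewrite inE; case: (x \in L i); case: (x \in L j).
Qed.

Lemma sum_incidence_deg_sqr_ge :
  {in A &, forall i j, i != j -> L i :&: L j != set0} ->
  \sum_x incidence_deg x + #|A| * #|A|.-1 <= \sum_x incidence_deg x ^ 2.
Proof.
move=> meet_L.
rewrite sum_incidence_deg sum_incidence_deg_sqr -sum_nat_const -big_split /=.
apply: leq_sum => i iA; rewrite (bigD1 i) //= setIid leq_add2l.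
rewrite [#|A|](cardsD1 i) iA -sum1_card.
rewrite (eq_bigl (fun j => (j \in A) && (j != i))) => [|j]; last first.
  by rewrite !inE andbC.
by apply: leq_sum => j /andP[jA ji]; rewrite card_gt0 meet_L // eq_sym.
Qed.

Lemma in_bigcup_incidence x :
  (x \in \bigcup_(i in A) L i) = (0 < incidence_deg x).
Proof.
apply/bigcupP/card_gt0P => [[i iA xLi] | [i]]; first by exists i; rewrite inE iA.
by rewrite inE => /andP[iA xLi]; exists i.
Qed.

Variable d : nat.
Hypothesis incidence_deg_le : forall x, incidence_deg x <= d.

Lemma sum_card_leq_bigcup :
  \sum_(i in A) #|L i| <= d * #|\bigcup_(i in A) L i|.
Proof.
rewrite -sum_incidence_deg -sum1_card big_distrr /= [X in _ <= X]big_mkcond /=.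
apply: leq_sum => x _; rewrite in_bigcup_incidence muln1.
by case: ltnP => [_|]; rewrite ?incidence_deg_le // leqn0 => /eqP ->.
Qed.

Lemma card_uncovered_lb k :
  (forall i, i \in A -> #|L i| <= k) ->
  {in A &, forall i j, i != j -> L i :&: L j != set0} ->
  d * #|X| + #|A| * #|A|.-1 <= d * #|~: \bigcup_(i in A) L i| + d * k * #|A|.
Proof.
move=> card_L_le meet_L.
(* (N - 1) (N - d) <= 0 when 1 <= N <= d *)
have pointwise x :
    d + incidence_deg x ^ 2 <= d * (incidence_deg x == 0) + d.+1 * incidence_deg x.
  by have := incidence_deg_le x; case: (incidence_deg x) => [|n] /=; nia.
have moment1 : \sum_x incidence_deg x <= k * #|A|.
  by rewrite sum_incidence_deg mulnC -sum_nat_const; apply: leq_sum.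
have moment2 := sum_incidence_deg_sqr_ge meet_L.
have uncovered : #|~: \bigcup_(i in A) L i| = \sum_x (incidence_deg x == 0).
  rewrite -sum1_card [LHS]big_mkcond; apply: eq_bigr => x _.
  by rewrite !inE in_bigcup_incidence lt0n; case: (incidence_deg x == 0).
have : \sum_x (d + incidence_deg x ^ 2)
       <= \sum_x (d * (incidence_deg x == 0) + d.+1 * incidence_deg x).
  by apply: leq_sum => x _; apply: pointwise.
rewrite !big_split /= -!big_distrr /= -uncovered sum_nat_const.
have : d * \sum_x incidence_deg x <= d * (k * #|A|) by rewrite leq_mul2l moment1 orbT.
rewrite -mulnA; set n := #|X|; lia.
Qed.

End Incidence.

Local Open Scope ring_scope.

Lemma size_monic_cubic (R : nzRingType) (a b c : R) :
  size ('X^3 + a%:P * 'X^2 + b%:P * 'X + c%:P) = 4%N.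
Proof.
rewrite -!addrA size_polyDl size_polyXn // ltnS.
apply/leq_sizeP => j j_ge3.
rewrite !(coefD, coefCM, coefXn, coefX, coefC) !gtn_eqF ?(leq_trans _ j_ge3) //.
by rewrite !mulr0 !addr0.
Qed.

Lemma irredp_root_size (R : idomainType) (p : {poly R}) x :
  irreducible_poly p -> root p x -> size p = 2%N.
Proof.
move=> irr_p; rewrite -dvdp_XsubCl => /(irredp_XsubCP irr_p)[] /eqp_size.
  by rewrite size_XsubC size_poly1.
by rewrite size_XsubC.
Qed.

Lemma card_roots_lt_size (R : finIdomainType) (p : {poly R}) (A : {pred R}) :
  p != 0 -> {subset A <= root p} -> (#|A| < size p)%N.
Proof.
move=> p_neq0 A_roots; rewrite cardE max_poly_roots ?enum_uniq //.
by apply/allP => x; rewrite mem_enum => /A_roots.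
Qed.

Section Cubics.

Variable F : finFieldType.

Local Notation pLt l := (pL l.1.1 l.1.2 l.2).

Definition rootless (p : {poly F}) : bool := [forall x, ~~ root p x].

Lemma horner_pL (l0 l1 l2 s : F) :
  (pL l0 l1 l2).[s] = s ^+ 3 - l2 * s ^+ 2 - l1 * s - l0.
Proof. by rewrite /pL !hornerE. Qed.

Lemma size_pL (l0 l1 l2 : F) : size (pL l0 l1 l2) = 4%N.
Proof. by rewrite -(size_monic_cubic (- l2) (- l1) (- l0)) /pL !polyCN !mulNr. Qed.

Lemma size_pL_addX (l0 l1 l2 : F) : size (pL l0 l1 l2 + 'X) = 4%N.
Proof.
rewrite -(size_monic_cubic (- l2) (1 - l1) (- l0)); congr (size (polyseq _)).
by rewrite /pL polyCB polyC1 !polyCN; ring.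
Qed.

Lemma size_rL (l0 l1 l2 : F) : size (rL l0 l1 l2) = 4%N.
Proof. by rewrite -(size_monic_cubic l2 (- (l1 - 1)) l0) /rL polyCN mulNr. Qed.

Lemma pL_irreducible (l0 l1 l2 : F) :
  rootless (pL l0 l1 l2) -> irreducible_poly (pL l0 l1 l2).
Proof. by move=> /forallP; apply: cubic_irreducible; rewrite size_pL. Qed.

Lemma horner_rL_opp (l0 l1 l2 t : F) :
  (rL l0 l1 l2).[- t] = - ((pL l0 l1 l2).[t] + t).
Proof.
rewrite /rL horner_pL !(hornerD, hornerN, hornerM, hornerC, hornerX, hornerXn).
ring.
Qed.

Lemma rL_reducible (l0 l1 l2 t : F) :
  (pL l0 l1 l2).[t] = - t -> ~ irreducible_poly (rL l0 l1 l2).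
Proof.
move=> pL_t /irredp_root_size rL_size.
suff /rL_size: root (rL l0 l1 l2) (- t) by rewrite size_rL.
by rewrite /root horner_rL_opp pL_t addNr oppr0.
Qed.

Section Fiber.

Variable t : F.

Definition fiber_param (x : F * F) : F * F * F :=
  ((t ^+ 3 - x.2 * t ^+ 2 - x.1 * t + t, x.1), x.2).

Lemma fiber_param_inj : injective fiber_param.
Proof. by move=> [l1 l2] [l1' l2'] [_ -> ->]. Qed.

Lemma horner_fiber_param_t x : (pLt (fiber_param x)).[t] = - t.
Proof. by rewrite horner_pL /=; ring. Qed.

Definition line_const (s : F) : F := s ^+ 2 + s * t + t ^+ 2 - t / (s - t).

Lemma root_fiber_param s x :
  s != t -> root (pLt (fiber_param x)) s = (x.1 + x.2 * (s + t) == line_const s).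
Proof.
move=> s_neq_t; have st_neq0 : s - t != 0 by rewrite subr_eq0.
have pL_s : (pLt (fiber_param x)).[s] = (s - t) * (line_const s - x.2 * (s + t) - x.1).
  by rewrite horner_pL /line_const /=; field.
by rewrite /root pL_s mulf_eq0 (negbTE st_neq0) /= subr_eq0 subr_eq eq_sym.
Qed.

Definition root_line (s : F) : {set F * F} :=
  [set x | root (pLt (fiber_param x)) s].

Lemma card_root_line s : s != t -> (#|root_line s| <= #|F|)%N.
Proof.
move=> s_neq_t; rewrite -[#|F|]cardsT.
apply: leq_trans (leq_imset_card (fun l2 => (line_const s - l2 * (s + t), l2)) _).
apply/subset_leq_card/subsetP => -[l1 l2]; rewrite inE root_fiber_param //= => /eqP <-.
by apply/imsetP; exists l2; rewrite ?inE // addrK.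
Qed.

Lemma root_lines_meet s1 s2 :
  s1 != t -> s2 != t -> s1 != s2 -> root_line s1 :&: root_line s2 != set0.
Proof.
move=> s1_neq_t s2_neq_t s1_neq_s2.
pose l2 := (line_const s1 - line_const s2) / (s1 - s2).
apply/set0Pn; exists (line_const s1 - l2 * (s1 + t), l2).
rewrite !inE !root_fiber_param //=; apply/andP; split; apply/eqP; rewrite /l2; field.
all: by rewrite subr_eq0.
Qed.

Lemma root_line_deg x : (incidence_deg [set~ t] root_line x <= 3)%N.
Proof.
rewrite -ltnS -(size_pL (fiber_param x).1.1 (fiber_param x).1.2 (fiber_param x).2).
apply: card_roots_lt_size; first by rewrite -size_poly_eq0 size_pL.
by move=> s; rewrite !inE => /andP[_].
Qed.

Hypothesis t_neq0 : t != 0.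

Lemma uncovered_root_lines x :
  (x \in ~: \bigcup_(s in [set~ t]) root_line s) = rootless (pLt (fiber_param x)).
Proof.
rewrite inE; apply/negP/forallP => [not_covered s | no_root /bigcupP[s _]].
  have [->|s_neq_t] := eqVneq s t.
    by rewrite /root horner_fiber_param_t oppr_eq0.
  by apply/negP => root_s; apply: not_covered; apply/bigcupP; exists s; rewrite !inE.
by rewrite inE (negbTE (no_root s)).
Qed.

Lemma card_rootless_fiber_param :
  (#|F| ^ 2 + 2 <= 3 * #|[set x | rootless (pLt (fiber_param x))]|)%N.
Proof.
have card_le s : s \in [set~ t] -> (#|root_line s| <= #|F|)%N.
  by rewrite in_setC1; apply: card_root_line.
have meet : {in [set~ t] &, forall s1 s2,
    s1 != s2 -> root_line s1 :&: root_line s2 != set0}.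
  by move=> s1 s2; rewrite !in_setC1; apply: root_lines_meet.
have := card_uncovered_lb root_line_deg card_le meet.
rewrite card_prod cardsC1 (eq_card (B := [set x | rootless (pLt (fiber_param x))])).
  by have := card_finNzRing_gt1 F; set q := #|F|; case: q => [|[|q]] //= _; nia.
by move=> x; rewrite inE uncovered_root_lines.
Qed.

End Fiber.

Definition fiber_rootless (t : F) : {set F * F * F} :=
  [set l | rootless (pLt l) && ((pLt l).[t] == - t)].

Lemma fiber_rootless_deg l : (incidence_deg [set: F] fiber_rootless l <= 3)%N.
Proof.
rewrite -ltnS -(size_pL_addX l.1.1 l.1.2 l.2).
apply: card_roots_lt_size; first by rewrite -size_poly_eq0 size_pL_addX.
move=> t; rewrite !inE => /and3P[_ _ /eqP pL_t].
by rewrite unfold_in /root hornerD hornerX pL_t addNr.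
Qed.

Lemma card_fiber_rootless t : t != 0 -> (#|F| ^ 2 + 2 <= 3 * #|fiber_rootless t|)%N.
Proof.
move=> t_neq0; apply: leq_trans (card_rootless_fiber_param t_neq0) _.
rewrite leq_mul2l /=.
rewrite -(card_imset _ (@fiber_param_inj t)); apply/subset_leq_card/subsetP.
move=> l /imsetP[x]; rewrite inE => x_rootless ->.
by rewrite inE x_rootless horner_fiber_param_t eqxx.
Qed.

Lemma card_bigcup_fiber_rootless :
  ((#|F| - 1) * (#|F| ^ 2 + 2) <= 9 * #|\bigcup_(t in [set: F]) fiber_rootless t|)%N.
Proof.
apply: (@leq_trans (3 * \sum_(t in [set: F]) #|fiber_rootless t|)); last first.
  rewrite (_ : 9 = 3 * 3)%N // -mulnA leq_mul2l /=.
  exact: sum_card_leq_bigcup fiber_rootless_deg.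
rewrite subn1 -(cardsC1 0) -sum_nat_const big_distrr /=.
rewrite big_mkcond [X in (_ <= X)%N]big_mkcond.
apply: leq_sum => t _; rewrite in_setC1 in_setT; case: eqP => // /eqP.
exact: card_fiber_rootless.
Qed.

End Cubics.

Theorem lemma4p5 (F : finFieldType) :
  exists S : {set F * F * F},
    (forall l : F * F * F, l \in S ->
       irreducible_poly (pL l.1.1 l.1.2 l.2) /\
       ~ irreducible_poly (rL l.1.1 l.1.2 l.2)) /\
    ((#|F| * (#|F| - 1) ^ 2)%:R / 9%:R - (2 * (#|F| - 1))%:R / 3%:R
       <= (#|S|%:R : rat)).
Proof.
exists (\bigcup_(t in [set: F]) fiber_rootless t); split.
  move=> l /bigcupP[t _]; rewrite inE => /andP[l_rootless /eqP pL_t].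
  by split; [apply: pL_irreducible | apply: rL_reducible pL_t].
have := card_bigcup_fiber_rootless F; have := card_finNzRing_gt1 F.
set q := #|F|; set n := #|_|; move=> q_gt1 card_n.
have : (q * (q - 1) ^ 2)%:R <= 9%:R * n%:R :> rat by rewrite -natrM ler_nat; nia.
have := ler0n rat (2 * (q - 1)); lra.
Qed.
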